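(* Let $G=(g_1,\dots,g_k)\in\mathbb{N}_0^k$ with $g_1>0$ and $c(G)=(c_2,\dots,c_k)$, and let $z_1=\gcd(G)$. Then $G$ is telescopic if and only if for each $i=2,\dots,k$ there exists $z_i\in\langle z_1\rangle$ (i.e. a non-negative multiple of $z_1$) such that $g_i=z_iC_{i,k}$, $\gcd(z_i/z_1,c_i)=1$, and $z_i\in\langle z_jC_{j,i-1}:1\le j<i\rangle$.
   Context: $\langle A\rangle$ is the set of $\mathbb{N}_0$-linear combinations of the elements of $A$. $G_i=(g_1,\dots,g_i)$, $d_i=\gcd(G_i)$, $c_j=d_{j-1}/d_j$ for $2\le j\le k$; $G$ is telescopic if $c_jg_j\in\langle G_{j-1}\rangle$ for all $2\le j\le k$. $C_{m,n}=\prod_{j=m+1}^n c_j$, with the empty product (when $n\le m$) equal to $1$. *)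

(* Sequences G = (g_1,...,g_k) are represented by g : nat -> nat,
   only the values at indices 1..k being relevant. *)
From mathcomp Require Import all_boot.
Set Implicit Arguments. Unset Strict Implicit. Unset Printing Implicit Defensive.

Definition in_span (m : nat) (f : nat -> nat) (x : nat) : Prop :=
  exists a : nat -> nat, x = \sum_(1 <= j < m.+1) a j * f j.

Definition dG (g : nat -> nat) (i : nat) : nat :=
  \big[gcdn/0]_(1 <= j < i.+1) g j.

Definition cG (g : nat -> nat) (j : nat) : nat := dG g j.-1 %/ dG g j.

Definition CG (g : nat -> nat) (m n : nat) : nat :=
  \prod_(m.+1 <= j < n.+1) cG g j.

Definition telescopic (k : nat) (g : nat -> nat) : Prop :=
  forall j, 2 <= j <= k -> in_span j.-1 g (cG g j * g j).

(** With d_i = gcd(g_1,...,g_i) one has c_i d_i = d_(i-1), hence C_(i,k) d_k = d_i,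
   so the only candidate is z_i = (g_i / d_i) d_k.  For it, z_i / z_1 = g_i / d_i and
   c_i = d_(i-1) / d_i are the two cofactors of d_i = gcd(d_(i-1), g_i), hence coprime;
   and multiplying by d_(i-1) turns z_j C_(j,i-1) into g_j d_k and z_i into c_i g_i d_k,
   so the span condition on z_i is the telescopic condition on g_i scaled by d_k. *)
From mathcomp Require Import all_boot.

Set Implicit Arguments.
Unset Strict Implicit.

Lemma coprime_divn_gcd m n :
  0 < gcdn m n -> coprime (m %/ gcdn m n) (n %/ gcdn m n).
Proof.
move=> gt0; rewrite /coprime -(eqn_pmul2r gt0) mul1n muln_gcdl.
by rewrite !divnK ?dvdn_gcdl ?dvdn_gcdr.
Qed.

Lemma in_spanMr m f x c :
  0 < c -> in_span m (fun j => f j * c) (x * c) <-> in_span m f x.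
Proof.
have sumM a : \sum_(1 <= j < m.+1) a j * (f j * c) = (\sum_(1 <= j < m.+1) a j * f j) * c.
  by rewrite big_distrl; apply: eq_bigr => j _; rewrite mulnA.
move=> c_gt0; split=> -[a def_x]; exists a.
  by apply/eqP; rewrite -(eqn_pmul2r c_gt0) def_x sumM.
by rewrite sumM def_x.
Qed.

Lemma eq_in_span m f f' x :
  (forall j, 1 <= j < m.+1 -> f j = f' j) -> in_span m f x <-> in_span m f' x.
Proof.
move=> eq_f; have eq_sum a : \sum_(1 <= j < m.+1) a j * f j = \sum_(1 <= j < m.+1) a j * f' j.
  by apply: eq_big_nat => j /eq_f ->.
by split=> -[a def_x]; exists a; rewrite def_x eq_sum.
Qed.

Section GcdChain.

Variable g : nat -> nat.

Lemma dG1 : dG g 1 = g 1.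
Proof. by rewrite /dG big_nat1. Qed.

Lemma dGS i : dG g i.+1 = gcdn (dG g i) (g i.+1).
Proof. by rewrite /dG big_nat_recr. Qed.

Lemma dG_gt0 i : 0 < g 1 -> 0 < i -> 0 < dG g i.
Proof.
move=> g1_gt0; elim: i => [//|[|i] IHi _]; first by rewrite dG1.
by rewrite dGS gcdn_gt0 IHi.
Qed.

Lemma dG_dvd i : 0 < i -> dG g i %| g i.
Proof. by case: i => // i _; rewrite dGS dvdn_gcdr. Qed.

Lemma dG_dvd_pred i : dG g i %| dG g i.-1.
Proof. by case: i => // i; rewrite dGS dvdn_gcdl. Qed.

Lemma cG_mul_dG i : cG g i * dG g i = dG g i.-1.
Proof. by rewrite /cG divnK ?dG_dvd_pred. Qed.

Lemma CG_mul_dG m n : m <= n -> CG g m n * dG g n = dG g m.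
Proof.
elim: n => [|n IHn]; first by rewrite leqn0 => /eqP ->; rewrite /CG big_geq ?mul1n.
rewrite leq_eqVlt => /orP[/eqP ->|lt_mn]; first by rewrite /CG big_geq ?mul1n.
by rewrite /CG big_nat_recr // -mulnA cG_mul_dG -IHn.
Qed.

Lemma coprime_dG_cG i : 0 < g 1 -> 1 < i -> coprime (g i %/ dG g i) (cG g i).
Proof.
case: i => // i g1_gt0 i_gt0; rewrite /cG dGS coprime_sym.
by apply: coprime_divn_gcd; rewrite gcdn_gt0 dG_gt0.
Qed.

(** The z_i of the theorem; it is forced by [g i = z i * CG g i k]. *)
Definition zG k j := g j %/ dG g j * dG g k.

Lemma zG1 k : 0 < g 1 -> zG k 1 = dG g k.
Proof. by move=> g1_gt0; rewrite /zG dG1 divnn g1_gt0 mul1n. Qed.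

Lemma zG_CG k j n : 0 < j <= n -> zG k j * CG g j n * dG g n = g j * dG g k.
Proof.
case/andP=> j_gt0 le_jn; rewrite -mulnA CG_mul_dG // /zG.
by rewrite mulnAC divnK ?dG_dvd.
Qed.

Lemma zG_mul_dG_pred k i : 0 < i -> zG k i * dG g i.-1 = cG g i * g i * dG g k.
Proof.
move=> i_gt0; have CG_ii : CG g i i = 1 by rewrite /CG big_geq.
by rewrite -cG_mul_dG mulnCA -[zG k i]muln1 -CG_ii zG_CG ?i_gt0 ?leqnn // mulnA.
Qed.

Lemma zG_mul_CG k i : 0 < i <= k -> zG k i * CG g i k = g i.
Proof.
case/andP=> i_gt0 le_ik.
by rewrite /zG -mulnA [dG g k * _]mulnC CG_mul_dG // divnK ?dG_dvd.
Qed.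

Lemma zG_unique k i x : 0 < g 1 -> 0 < i <= k -> g i = x * CG g i k -> x = zG k i.
Proof.
move=> g1_gt0 /[dup] /andP[i_gt0 le_ik] /zG_mul_CG <-.
have C_gt0 : 0 < CG g i k.
  by move: (dG_gt0 g1_gt0 i_gt0); rewrite -(CG_mul_dG le_ik) muln_gt0 => /andP[].
by move/eqP; rewrite eqn_pmul2r // => /eqP.
Qed.

Lemma in_span_zG_iff k i : 0 < g 1 -> 2 <= i <= k ->
  in_span i.-1 (fun j => zG k j * CG g j i.-1) (zG k i) <->
  in_span i.-1 g (cG g i * g i).
Proof.
move=> g1_gt0 /andP[le2i le_ik]; have i_gt0 : 0 < i by apply: leq_trans le2i.
have di_gt0 : 0 < dG g i.-1 by apply: dG_gt0; case: i le2i {le_ik i_gt0} => [|[]].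
have dk_gt0 : 0 < dG g k by apply: dG_gt0 (leq_trans i_gt0 le_ik).
apply: iff_trans (iff_sym (in_spanMr _ _ _ di_gt0)) _.
rewrite zG_mul_dG_pred //; apply: iff_trans (in_spanMr _ _ _ dk_gt0).
by apply: eq_in_span => j /andP[j_gt0 lt_ji]; rewrite zG_CG // j_gt0 -ltnS.
Qed.

End GcdChain.

Theorem mainTheorem9 (k : nat) (g : nat -> nat) (hk : 1 <= k) (hg1 : 0 < g 1) :
  telescopic k g <->
  exists z : nat -> nat,
    z 1 = dG g k /\
    forall i, 2 <= i <= k ->
      [/\ in_span 1 (fun _ => z 1) (z i),
          g i = z i * CG g i k,
          coprime (z i %/ z 1) (cG g i) &
          in_span i.-1 (fun j => z j * CG g j i.-1) (z i)].
Proof.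
split=> [tel | [z [z1 hz]]].
  exists (zG g k); split=> [|i hi]; first exact: zG1.
  have /andP[le2i le_ik] := hi; have i_gt0 : 0 < i by apply: leq_trans le2i.
  split.
  - by exists (fun=> g i %/ dG g i); rewrite big_nat1 zG1.
  - by rewrite zG_mul_CG ?i_gt0.
  - by rewrite zG1 // mulnK ?(dG_gt0 hg1 hk) ?coprime_dG_cG.
  - exact/in_span_zG_iff/tel.
(* Conversely, only [g i = z i * CG g i k] and the span condition are needed. *)
have z_eq j : 0 < j <= k -> z j = zG g k j.
  case/andP=> j_gt0 le_jk; case: (ltngtP j 1) j_gt0 => // [lt1j|->] _; last by rewrite z1 zG1.
  have [|_ def_gj _ _] := hz j; first by rewrite lt1j.
  by apply: zG_unique def_gj; rewrite // (ltnW lt1j).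
move=> i hi; have /andP[le2i le_ik] := hi.
apply/(in_span_zG_iff hg1 hi); have [_ _ _] := hz i hi; rewrite z_eq ?(ltnW le2i) //.
apply: iffLR; apply: eq_in_span => j /andP[j_gt0]; rewrite prednK ?(ltnW le2i) // => lt_ji.
by rewrite z_eq // j_gt0 (leq_trans (ltnW lt_ji) le_ik).
Qed.
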